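(* Let $n\ge 2$, $d\ge 1$, and let $(p;v)$ be the canonical pair of a line $\ell$ in $[n]^d$ of odd weight. Then $\sigma(p)\equiv\sigma(p+(i-1)v)\pmod 2$ for every integer $1\le i\le\lfloor n/2\rfloor$, and $\sigma(p)\not\equiv\sigma(p+(i-1)v)\pmod 2$ for every integer $\lceil n/2\rceil< i\le n$.
   Context: Let $[n]=\{1,\dots,n\}$. For $p\in[n]^d$ and $v\in\{-1,0,1\}^d$ with $v\ne\vec 0$, if $p+tv\in[n]^d$ for all $0\le t\le n-1$, the set $\ell=\{p,p+v,\dots,p+(n-1)v\}$ is a line with initial point $p$ and direction $v$. The canonical pair of a line is its unique representation $(p;v)$ in which the first nonzero coordinate of $v$ equals $+1$; the weight of the line is the number of nonzero coordinates of this $v$. For $p\in[n]^d$ and $i\in[n]$ let $\pi_i(p)=|\{j\in[d]:p_j=i\}|$, and let $\sigma(p)=\sum_{1\le i\le n/2}\pi_i(p)$. *)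

From mathcomp Require Import all_boot all_order all_algebra.
Unset Strict Implicit. Unset Printing Implicit Defensive.
Import Order.TTheory GRing.Theory Num.Theory.
Local Open Scope ring_scope.

Definition in_grid (n d : nat) (p : 'I_d -> int) : Prop :=
  forall j : 'I_d, 1 <= p j <= n%:Z.

Definition padd (d : nat) (p : 'I_d -> int) (t : int) (v : 'I_d -> int) : 'I_d -> int :=
  fun j => p j + t * v j.

Definition is_line (n d : nat) (p v : 'I_d -> int) : Prop :=
  [/\ forall j : 'I_d, v j = -1 \/ v j = 0 \/ v j = 1,
      exists j : 'I_d, v j != 0 &
      forall t : nat, (t <= n - 1)%N -> in_grid n d (padd d p t%:Z v)].

Definition canonical_pair (n d : nat) (p v : 'I_d -> int) : Prop :=
  is_line n d p v /\
  exists j : 'I_d, v j = 1 /\ forall k : 'I_d, (k < j)%N -> v k = 0.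

Definition weight (d : nat) (v : 'I_d -> int) : nat := #|[pred j : 'I_d | v j != 0]|.

Definition pi_ (d : nat) (i : nat) (p : 'I_d -> int) : nat := #|[pred j : 'I_d | p j == i%:Z]|.

Definition sigma (n d : nat) (p : 'I_d -> int) : nat :=
  (\sum_(1 <= i < (n./2).+1) pi_ d i p)%N.

(* Along a line, a coordinate with v_j = 0 is constant, one with v_j = 1
   runs through 1, 2, ..., n and one with v_j = -1 through n, n - 1, ..., 1.
   Before step floor(n/2) the increasing coordinates are still in the lower
   half and the decreasing ones not yet, so sigma does not move at all.  From
   step ceil(n/2) on, every non-constant coordinate has crossed over, so
   sigma changes by a number congruent to the weight, which is odd. *)

From mathcomp Require Import all_boot all_order all_algebra zify.
Import Order.TTheory GRing.Theory Num.Theory.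
Local Open Scope ring_scope.

Lemma card_sum_nat (T : finType) (a : pred T) : #|a| = (\sum_(x : T) a x)%N.
Proof.
rewrite -sum1_card big_mkcond; apply: eq_bigr => x _.
by rewrite unfold_in; case: (a x).
Qed.

Lemma odd_card_addb (T : finType) (a b : pred T) :
  odd #|[pred x | a x (+) b x]| = odd #|a| (+) odd #|b|.
Proof.
have odd_card (c : pred T) : odd #|c| = \big[addb/false]_(x : T) c x.
  rewrite card_sum_nat (big_morph odd oddD erefl).
  by apply: eq_bigr => x _; case: (c x).
by rewrite !odd_card -big_split.
Qed.

Lemma sum_eq_nat_range (x : int) (m : nat) :
  (\sum_(1 <= i < m.+1) (x == i%:Z))%N = (1 <= x <= m%:Z).
Proof.
case: x => [k|k]; last by rewrite big1.
under eq_bigr => i _ do rewrite eqz_nat eq_sym.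
by rewrite -big_mkcond big_nat1_eq lez_nat.
Qed.

Definition low_half (n : nat) (x : int) : bool := 1 <= x <= (n./2)%:Z.

Lemma sigmaE (n d : nat) (q : 'I_d -> int) :
  sigma n d q = #|[pred j | low_half n (q j)]|.
Proof.
rewrite /sigma /pi_ card_sum_nat.
under eq_bigr => i _ do rewrite card_sum_nat.
by rewrite exchange_big; apply: eq_bigr => j _; rewrite sum_eq_nat_range.
Qed.

Section SigmaAlongLine.

Variables (n d : nat) (p v : 'I_d -> int).
Hypotheses (n_ge2 : (2 <= n)%N) (line : is_line n d p v).

Lemma line_grid_ends j :
  1 <= p j <= n%:Z /\ 1 <= p j + (n - 1)%N%:Z * v j <= n%:Z.
Proof.
case: line => _ _ grid; split; last exact: grid (n - 1)%N (leqnn _) j.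
by have := grid 0%N (leq0n _) j; rewrite /padd mul0r addr0.
Qed.

Lemma line_start_inc j : v j = 1 -> p j = 1.
Proof. by move=> vj; have [] := line_grid_ends j; rewrite vj mulr1; lia. Qed.

Lemma line_start_dec j : v j = -1 -> p j = n%:Z.
Proof. by move=> vj; have [] := line_grid_ends j; rewrite vj mulrN1; lia. Qed.

Lemma low_half_line_early t j :
  (t < n./2)%N -> low_half n (padd d p t%:Z v j) = low_half n (p j).
Proof.
case: line => dir _ _; rewrite /low_half /padd -divn2.
case: (dir j) => [vj|[vj|vj]]; rewrite vj.
- rewrite (line_start_dec j vj); lia.
- by rewrite mulr0 addr0.
- rewrite (line_start_inc j vj); lia.
Qed.

Lemma low_half_line_late t j : (uphalf n <= t <= n - 1)%N ->
  low_half n (padd d p t%:Z v j) = low_half n (p j) (+) (v j != 0).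
Proof.
case: line => dir _ _; rewrite /low_half /padd uphalfE -!divn2.
case: (dir j) => [vj|[vj|vj]]; rewrite vj.
- rewrite (line_start_dec j vj); lia.
- by rewrite mulr0 addr0 eqxx addbF.
- rewrite (line_start_inc j vj); lia.
Qed.

Lemma sigma_line_early t :
  (t < n./2)%N -> sigma n d (padd d p t%:Z v) = sigma n d p.
Proof.
by move=> t_lt; rewrite !sigmaE; apply: eq_card => j; apply: low_half_line_early.
Qed.

Lemma odd_sigma_line_late t : (uphalf n <= t <= n - 1)%N ->
  odd (sigma n d (padd d p t%:Z v)) = odd (sigma n d p) (+) odd (weight d v).
Proof.
move=> t_range; rewrite !sigmaE /weight -odd_card_addb.
by congr (odd _); apply: eq_card => j; apply: low_half_line_late.
Qed.

End SigmaAlongLine.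

Theorem lemma19 (n d : nat) (p v : 'I_d -> int) :
  (2 <= n)%N -> (1 <= d)%N ->
  canonical_pair n d p v -> odd (weight d v) ->
  (forall i : nat, (1 <= i <= n./2)%N ->
     odd (sigma n d p) = odd (sigma n d (padd d p (i.-1)%:Z v))) /\
  (forall i : nat, (uphalf n < i <= n)%N ->
     odd (sigma n d p) != odd (sigma n d (padd d p (i.-1)%:Z v))).
Proof.
move=> n_ge2 _ [line _] odd_weight; split=> i /andP[i_ge i_le].
- by rewrite sigma_line_early //; lia.
- rewrite odd_sigma_line_late // ?odd_weight; first by case: (odd _).
  by apply/andP; split; lia.
Qed.
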